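(* The function $\varphi\colon[0,1]\to[0,1]$, $\varphi(t)=\max(t,1/2)$, is $\mathfrak{cm}$-nonexpansive (with respect to the absolute value on $\mathbb{R}$): for all $n\in\mathbb{N}$, $s\in[0,1]$ and sequences $(t_i)_{i=1}^\infty\subset[0,1]$, $$\limsup_{i\to\infty}\sup_{A\subset\{1,\dots,n\}}\Big|\sum_{k\in A}(\varphi(t_{i+k})-\varphi(s))\Big|\le\limsup_{i\to\infty}\sup_{A\subset\{1,\dots,n\}}\Big|\sum_{k\in A}(t_{i+k}-s)\Big|.$$ *)

From mathcomp Require Import all_boot all_order all_algebra.
From mathcomp Require Import all_classical all_reals all_analysis.
Set Implicit Arguments. Unset Strict Implicit. Unset Printing Implicit Defensive.
Import Order.TTheory GRing.Theory Num.Theory.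
Local Open Scope ring_scope.

Definition phi_half {R : realType} (t : R) : R := Num.max t (2^-1).

(* sup_{A subset {1..n}} | sum_{k in A} (f (i+k) - c) |.
   Index k in {1..n} is encoded as k : 'I_n standing for k.+1.
   The empty set contributes 0, so max with base 0 is harmless. *)
Definition cm_sup {R : realType} (n : nat) (f : nat -> R) (c : R) (i : nat) : R :=
  \big[Num.max/0]_(A : {set 'I_n}) `| \sum_(k in A) (f (i + k.+1)%N - c) |.

(* Since t |-> max(t, c) is nondecreasing and 1-Lipschitz, each increment
   phi(t_k) - phi(s) lies between 0 and t_k - s.  The sum of the increments
   over a set A is at most their sum over the subset of A where they are
   positive, which is at most the sum of the t-increments over that subset
   (symmetrically for negative sums).  So for every i each subset sum for phi
   is dominated by a subset sum for t, and the limsup inequality follows by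
   monotonicity of limsup. *)

From mathcomp Require Import all_boot all_order all_algebra.
From mathcomp Require Import all_classical all_reals all_analysis.
From mathcomp Require Import lra.
Import Order.TTheory GRing.Theory Num.Theory.
Local Open Scope ring_scope.

Section MaxIncrement.
Variables (R : realDomainType) (c : R).

Lemma maxr_subr_gt0 (a b : R) :
  0 < Num.max a c - Num.max b c -> Num.max a c - Num.max b c <= a - b.
Proof. by have [ac|ca] := leP a c; have [bc|cb] := leP b c; lra. Qed.

Lemma maxr_subr_lt0 (a b : R) :
  Num.max a c - Num.max b c < 0 -> a - b <= Num.max a c - Num.max b c.
Proof. by have := @maxr_subr_gt0 b a; lra. Qed.

End MaxIncrement.

Section SubsetSums.
Variables (R : realDomainType) (I : finType).

Lemma sum_le_norm_sum_pos (u v : I -> R) (A : {set I}) :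
  (forall k, 0 < u k -> u k <= v k) ->
  \sum_(k in A) u k <= `|\sum_(k in [set k in A | 0 < u k]) v k|.
Proof.
move=> uv; apply: le_trans (ler_norm _).
rewrite (bigID (fun k => 0 < u k)) /= -[X in _ <= X]addr0; apply: lerD.
- rewrite [X in _ <= X](eq_bigl (fun k => (k \in A) && (0 < u k))); last first.
    by move=> k; rewrite inE.
  by apply: ler_sum => k /andP[_ /uv].
- by apply: sumr_le0 => k /andP[_]; rewrite -leNgt.
Qed.

Lemma bigmax_norm_subset_sum_le (u v : I -> R) :
  (forall k, 0 < u k -> u k <= v k) -> (forall k, u k < 0 -> v k <= u k) ->
  \big[Num.max/0]_(A : {set I}) `|\sum_(k in A) u k|
    <= \big[Num.max/0]_(A : {set I}) `|\sum_(k in A) v k|.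
Proof.
move=> uv_pos uv_neg; apply: bigmax_le => [|A _]; first exact: bigmax_ge_id.
have [su_ge0|su_lt0] := leP 0 (\sum_(k in A) u k).
- rewrite ger0_norm //; apply: le_trans (le_bigmax _ _ _).
  exact: sum_le_norm_sum_pos.
- have Nuv_pos k : 0 < - u k -> - u k <= - v k.
    by rewrite oppr_gt0 lerN2; exact: uv_neg.
  have := sum_le_norm_sum_pos _ _ A Nuv_pos; rewrite !sumrN normrN.
  move=> sum_neg_le; rewrite ltr0_norm //; apply: le_trans sum_neg_le _.
  exact: le_bigmax.
Qed.

End SubsetSums.

Lemma cm_sup_maxr_le (R : realType) (n : nat) (c s : R) (t : nat -> R) i :
  cm_sup n (fun j => Num.max (t j) c) (Num.max s c) i <= cm_sup n t s i.
Proof.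
apply: (@bigmax_norm_subset_sum_le _ _
  (fun k : 'I_n => Num.max (t (i + k.+1)%N) c - Num.max s c)
  (fun k : 'I_n => t (i + k.+1)%N - s)) => k.
- exact: maxr_subr_gt0.
- exact: maxr_subr_lt0.
Qed.

Lemma le_limn_esup (R : realType) (u v : (\bar R)^nat) :
  (forall i, u i <= v i)%E -> (limn_esup u <= limn_esup v)%E.
Proof.
move=> uv; rewrite !limn_esup_lim.
apply: lee_lim; [exact: is_cvg_esups|exact: is_cvg_esups|].
apply: nearW => m; apply: ge_ereal_sup => _ [k mk <-].
by apply: le_ereal_sup_tmp; exists (v k); [exists k|].
Qed.

Theorem proposition6p1 (R : realType) (n : nat) (s : R) (t : nat -> R) :
  0 <= s <= 1 ->
  (forall i, 0 <= t i <= 1) ->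
  (limn_esup (fun i => (cm_sup n (fun j => phi_half (t j)) (phi_half s) i)%:E)
   <= limn_esup (fun i => (cm_sup n t s i)%:E))%E.
Proof.
move=> _ _; apply: le_limn_esup => i.
by rewrite lee_fin; exact: cm_sup_maxr_le.
Qed.
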